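(* In the split CP-RPCA sampling model described in the context, suppose the test location $(i_\ast,j_\ast)$ satisfies $(i_\ast,j_\ast)\mid\Omega_{\mathrm{obs}}\sim\mathrm{Unif}(\Omega_{\mathrm{obs}}^{c})$. Let $n_{\mathrm{cal}}=|\Omega_{\mathrm{cal}}'|$ and write $\Omega_{\mathrm{cal}}'\cup\{(i_\ast,j_\ast)\}=\{(i_1,j_1),\ldots,(i_{n_{\mathrm{cal}}+1},j_{n_{\mathrm{cal}}+1})\}$. Then for every $k\in\{1,\ldots,n_{\mathrm{cal}}+1\}$, $$\mathbb{P}\big\{(i_\ast,j_\ast)=(i_k,j_k)\ \big|\ \Omega_{\mathrm{cal}}'\cup\{(i_\ast,j_\ast)\}=\{(i_1,j_1),\ldots,(i_{n_{\mathrm{cal}}+1},j_{n_{\mathrm{cal}}+1})\},\ \Omega_{\mathrm{tr}}\big\}=\omega_{i_kj_k},$$ where $\omega_{i_kj_k}=h_{i_kj_k}\big/\sum_{k'=1}^{n_{\mathrm{cal}}+1}h_{i_{k'}j_{k'}}$ and $h_{ij}=(1-p_{ij})/p_{ij}$ are the odds ratios.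
   Context: Let $d_1,d_2\ge1$ and $[d]=\{1,\ldots,d\}$. Observation indicators $Z_{ij}\sim\mathrm{Bern}(p_{ij})$ are independent over $(i,j)\in[d_1]\times[d_2]$, with nonzero probabilities $p_{ij}$; the observed set is $\Omega_{\mathrm{obs}}=\{(i,j):Z_{ij}=1\}$ and $\Omega_{\mathrm{obs}}^c$ is its complement in $[d_1]\times[d_2]$. Given a splitting proportion $q\in(0,1)$, independent $W_{ij}\sim\mathrm{Bern}(q)$ (independent of $Z$) split the observed set into a training set $\Omega_{\mathrm{tr}}=\{(i,j)\in\Omega_{\mathrm{obs}}:W_{ij}=1\}$ and a calibration set $\Omega_{\mathrm{cal}}=\{(i,j)\in\Omega_{\mathrm{obs}}:W_{ij}=0\}$. In the paper's sampling model, each element of $\Omega_{\mathrm{cal}}$ is independently (of everything else) flagged as contaminated with probability $\beta\in(0,1)$ and discarded; the discarded elements form $\Omega_{\mathrm{drop}}$ and the remaining ones form the trimmed calibration set $\Omega_{\mathrm{cal}}'$, so $\Omega_{\mathrm{cal}}=\Omega_{\mathrm{cal}}'\cup\Omega_{\mathrm{drop}}$. *)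

From mathcomp Require Import all_boot all_order all_algebra.
Set Implicit Arguments. Unset Strict Implicit. Unset Printing Implicit Defensive.
Import Order.TTheory GRing.Theory Num.Theory.
Local Open Scope ring_scope.

Definition idx (d1 d2 : nat) : finType := ('I_d1 * 'I_d2)%type.

(* An outcome: (Z, W, D, test location).  Z = observation indicators,
   W = training/calibration split indicators, D = contamination (drop) flags
   (only relevant on Omega_cal), and the test location (i_star, j_star). *)
Definition outcome (d1 d2 : nat) : finType :=
  ({ffun idx d1 d2 -> bool} * {ffun idx d1 d2 -> bool} * {ffun idx d1 d2 -> bool}
   * idx d1 d2)%type.

Section Model.
Variables (R : realFieldType) (d1 d2 : nat).
Variables (p : idx d1 d2 -> R) (q beta : R).

Definition oZ (w : outcome d1 d2) := w.1.1.1.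
Definition oW (w : outcome d1 d2) := w.1.1.2.
Definition oD (w : outcome d1 d2) := w.1.2.
Definition otest (w : outcome d1 d2) := w.2.

Definition Omega_obs (w : outcome d1 d2) : {set idx d1 d2} := [set x | oZ w x].
Definition Omega_obs_c (w : outcome d1 d2) : {set idx d1 d2} := [set x | ~~ oZ w x].
Definition Omega_tr (w : outcome d1 d2) : {set idx d1 d2} :=
  [set x | oZ w x && oW w x].
Definition Omega_cal (w : outcome d1 d2) : {set idx d1 d2} :=
  [set x | oZ w x && ~~ oW w x].
Definition Omega_drop (w : outcome d1 d2) : {set idx d1 d2} :=
  [set x | oZ w x && ~~ oW w x && oD w x].
Definition Omega_calt (w : outcome d1 d2) : {set idx d1 d2} :=
  [set x | oZ w x && ~~ oW w x && ~~ oD w x].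

Definition bern (a : R) (b : bool) : R := if b then a else 1 - a.

Definition mass (w : outcome d1 d2) : R :=
  (\prod_(x : idx d1 d2) bern (p x) (oZ w x)) *
  (\prod_(x : idx d1 d2) bern q (oW w x)) *
  (\prod_(x : idx d1 d2) bern beta (oD w x)) *
  (if otest w \in Omega_obs_c w then (#|Omega_obs_c w|%:R)^-1 else 0).

Definition Pr (E : pred (outcome d1 d2)) : R := \sum_(w | E w) mass w.

Definition condPr (A B : pred (outcome d1 d2)) : R :=
  Pr (predI A B) / Pr B.

Definition odds (x : idx d1 d2) : R := (1 - p x) / p x.

End Model.

(* For distinct j, j' in S, transposing j and j' in the arrays Z, W, D and in
   the test location maps the event {test = j, Omega_cal' u {test} = S,
   Omega_tr = T} bijectively onto the same event with test = j': S contains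
   both points and, once the event has positive probability, T contains
   neither.  On that event Z_j = 0 (the test point is unobserved) and Z_j' = 1
   (j' lies in Omega_cal'), so the transposition only trades the factor
   (1 - p_j) p_j' of the mass for p_j (1 - p_j').  Hence P(test = j, ...) is
   proportional to h_j on S, and normalising over S gives omega. *)
From mathcomp Require Import all_boot all_order all_algebra perm.
From mathcomp Require Import ring.
Set Implicit Arguments. Unset Strict Implicit. Unset Printing Implicit Defensive.
Import Order.TTheory GRing.Theory Num.Theory.
Local Open Scope ring_scope.

Lemma prod_tperm_exchange (R : comNzRingType) (I : finType)
    (g : I -> bool -> R) (f : I -> bool) (k k' : I) :
  k != k' ->
  (\prod_x g x (f (tperm k k' x))) * g k (f k) * g k' (f k') =
  (\prod_x g x (f x)) * g k (f k') * g k' (f k).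
Proof.
move=> nkk'.
rewrite (bigD1 k) //= (bigD1 k') 1?eq_sym //=.
rewrite [\prod_x _](bigD1 k) //= [\prod_(i | i != k) _](bigD1 k') 1?eq_sym //=.
rewrite tpermL tpermR.
under eq_bigr => i /andP[ik ik'] do rewrite tpermD 1?eq_sym //.
ring.
Qed.

Lemma tperm_preimset_id (I : finType) (k k' : I) (S : {set I}) :
  (k \in S) = (k' \in S) -> tperm k k' @^-1: S = S.
Proof.
by move=> kk'S; apply/setP => x; rewrite inE; case: tpermP => [->|->|//].
Qed.

Lemma eq_preimset_perm (I : finType) (t : {perm I}) (A S : {set I}) :
  t @^-1: S = S -> (t @^-1: A == S) = (A == S).
Proof.
move=> {1}<-; apply/eqP/eqP => [tAS|-> //]; apply/setP => x.
by move/setP/(_ ((t^-1)%g x)): tAS; rewrite !inE permKV.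
Qed.

Section SplitSampling.

Variables (R : realFieldType) (d1 d2 : nat).
Variables (p : idx d1 d2 -> R) (q beta : R).

Local Notation mass := (mass p q beta).
Local Notation Pr := (Pr p q beta).

(* The arrays are pulled back along t and the test point is pushed forward, so
   that membership of the test point in every derived set is preserved. *)
Definition permute_outcome (t : {perm idx d1 d2}) (w : outcome d1 d2) :
    outcome d1 d2 :=
  ([ffun x => oZ w (t x)], [ffun x => oW w (t x)], [ffun x => oD w (t x)],
   (t^-1)%g (otest w)).

Lemma permute_outcome_tpermK (k k' : idx d1 d2) :
  involutive (permute_outcome (tperm k k')).
Proof.
case=> [[[Z W] D] x]; rewrite /permute_outcome /oZ /oW /oD /otest /= tpermV.
by congr (_, _, _, _); rewrite ?tpermK //; apply/ffunP => y; rewrite !ffunE tpermK.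
Qed.

Lemma Omega_obs_c_permute t w :
  Omega_obs_c (permute_outcome t w) = t @^-1: Omega_obs_c w.
Proof. by apply/setP => x; rewrite !inE /oZ /= ffunE. Qed.

Lemma mass_permute_outcome t w :
  mass (permute_outcome t w) =
  (\prod_x bern (p x) (oZ w (t x))) * (\prod_x bern q (oW w x)) *
  (\prod_x bern beta (oD w x)) *
  (if otest w \in Omega_obs_c w then (#|Omega_obs_c w|%:R)^-1 else 0).
Proof.
rewrite /mass Omega_obs_c_permute card_preimset; last exact: perm_inj.
rewrite inE /otest /= permKV; congr (_ * _ * _ * _).
- by rewrite /oZ /=; under eq_bigr do rewrite ffunE.
- rewrite /oW /=; under eq_bigr do rewrite ffunE.
  by rewrite [RHS](reindex_inj (@perm_inj _ t)).
- rewrite /oD /=; under eq_bigr do rewrite ffunE.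
  by rewrite [RHS](reindex_inj (@perm_inj _ t)).
Qed.

Lemma mass_permute_tperm (k k' : idx d1 d2) w :
  k != k' -> otest w = k -> oZ w k' ->
  mass (permute_outcome (tperm k k') w) * ((1 - p k) * p k') =
  mass w * (p k * (1 - p k')).
Proof.
move=> nkk' testk Zk'; rewrite mass_permute_outcome /mass.
set C := \prod_x bern q _; set D := \prod_x bern beta _.
set E := if _ then _ else _.
case Zk: (oZ w k).
  by rewrite /E inE testk Zk /= !mulr0 !mul0r.
have := @prod_tperm_exchange _ _ (fun x => bern (p x)) (oZ w) k k' nkk'.
rewrite Zk Zk' /= => exchange.
transitivity (\prod_x bern (p x) (oZ w (tperm k k' x)) * (1 - p k) * p k' * (C * D * E)).
  by ring.
by rewrite exchange; ring.
Qed.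

Variables (S T : {set idx d1 d2}).

Definition cal_test_tr_event (w : outcome d1 d2) : bool :=
  (Omega_calt w :|: [set otest w] == S) && (Omega_tr w == T).

Definition Pr_test_at (j : idx d1 d2) : R :=
  Pr (predI (fun w => otest w == j) cal_test_tr_event).

Lemma Pr_cal_test_tr_eq0 x : x \in S -> x \in T -> Pr cal_test_tr_event = 0.
Proof.
move=> xS xT; apply: big1 => w /andP[/eqP calS /eqP trT].
(* x is observed with W_x = 1, so it is neither in Omega_cal' nor a possible
   test point *)
move: xS xT; rewrite -calS -trT !inE => /orP[/andP[/andP[_ /negbTE-> _]]|/eqP->].
  by rewrite andbF.
by case/andP => Ztest _; rewrite /mass inE Ztest mulr0.
Qed.

Lemma Pr_cal_test_tr_sum : Pr cal_test_tr_event = \sum_(j in S) Pr_test_at j.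
Proof.
rewrite /Pr (partition_big (@otest d1 d2) (mem S)).
  by apply: eq_bigr => j _; apply: eq_bigl => w; rewrite /= andbC.
by move=> w /andP[/eqP <- _]; rewrite !inE eqxx orbT.
Qed.

Lemma Pr_test_at_p1 j : p j = 1 -> Pr_test_at j = 0.
Proof.
move=> pj1; apply: big1 => w /andP[/eqP testj _]; rewrite /mass.
case: ifP => [|_]; last by rewrite mulr0.
rewrite testj inE => /negbTE Zj.
by rewrite (bigD1 j) //= Zj /bern pj1 subrr !mul0r.
Qed.

Hypothesis disjoint_ST : forall x, x \in S -> x \notin T.

Lemma permute_tperm_event (j j' : idx d1 d2) w : j \in S -> j' \in S ->
  (otest (permute_outcome (tperm j j') w) == j') &&
    cal_test_tr_event (permute_outcome (tperm j j') w)
  = (otest w == j) && cal_test_tr_event w.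
Proof.
move=> jS j'S; rewrite /cal_test_tr_event; set t := tperm j j'.
have -> : otest (permute_outcome t w) = t (otest w) by rewrite /otest /= tpermV.
have -> : (t (otest w) == j') = (otest w == j).
  by rewrite -[j' in LHS](tpermL j j') (inj_eq perm_inj).
have -> : Omega_calt (permute_outcome t w) :|: [set t (otest w)] =
          t @^-1: (Omega_calt w :|: [set otest w]).
  apply/setP => x; rewrite !inE /oZ /oW /oD /= !ffunE; congr (_ || _).
  by rewrite -(inj_eq (@perm_inj _ t)) tpermK.
have -> : Omega_tr (permute_outcome t w) = t @^-1: Omega_tr w.
  by apply/setP => x; rewrite !inE /oZ /oW /= !ffunE.
rewrite !eq_preimset_perm //; apply: tperm_preimset_id.
  by rewrite (negbTE (disjoint_ST jS)) (negbTE (disjoint_ST j'S)).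
by rewrite jS j'S.
Qed.

Lemma Pr_test_at_tperm (j j' : idx d1 d2) : j \in S -> j' \in S -> j != j' ->
  Pr_test_at j' * ((1 - p j) * p j') = Pr_test_at j * (p j * (1 - p j')).
Proof.
move=> jS j'S njj'.
have swap_inj : injective (permute_outcome (tperm j j')).
  exact/inv_inj/permute_outcome_tpermK.
rewrite /Pr_test_at /Pr [in LHS](reindex_inj swap_inj) /=.
rewrite (eq_bigl _ _ (fun w => permute_tperm_event w jS j'S)) !mulr_suml.
apply: eq_bigr => w /andP[/eqP testj /andP[/eqP calS _]].
apply: mass_permute_tperm => //.
move: j'S; rewrite -calS !inE testj eq_sym (negbTE njj') orbF.
by case/andP => /andP[].
Qed.

Hypothesis p_prob : forall x, 0 < p x <= 1.

Lemma p_neq0 x : p x != 0.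
Proof. by case/andP: (p_prob x) => /gt_eqF ->. Qed.

Lemma odds_ge0 x : 0 <= odds p x.
Proof. by case/andP: (p_prob x) => p0 p1; rewrite /odds divr_ge0 ?subr_ge0 // ltW. Qed.

Lemma odds_eq0 x : odds p x = 0 -> p x = 1.
Proof.
move/eqP; rewrite /odds mulf_eq0 invr_eq0 (negbTE (p_neq0 x)) orbF subr_eq0.
by move/eqP.
Qed.

Lemma Pr_test_at_odds k : k \in S ->
  Pr_test_at k * \sum_(x in S) odds p x = odds p k * Pr cal_test_tr_event.
Proof.
move=> kS; rewrite Pr_cal_test_tr_sum !mulr_sumr; apply: eq_bigr => j jS.
have [<-|nkj] := eqVneq k j; first by rewrite mulrC.
apply: (mulIf (mulf_neq0 (p_neq0 k) (p_neq0 j))).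
transitivity (Pr_test_at k * (p k * (1 - p j))).
  by rewrite /odds; field; rewrite p_neq0.
rewrite -(Pr_test_at_tperm kS jS nkj) /odds; field.
by rewrite p_neq0.
Qed.

End SplitSampling.

Theorem lemma1 (R : realFieldType) (d1 d2 : nat)
  (p : idx d1 d2 -> R) (q beta : R)
  (hd1 : (1 <= d1)%N) (hd2 : (1 <= d2)%N)
  (hp : forall x, 0 < p x <= 1)
  (hq : 0 < q < 1) (hbeta : 0 < beta < 1)
  (S T : {set idx d1 d2}) (k : idx d1 d2) (hk : k \in S)
  (hpos : 0 < Pr p q beta
            (fun w => (Omega_calt w :|: [set otest w] == S) && (Omega_tr w == T))) :
  condPr p q beta (fun w => otest w == k)
    (fun w => (Omega_calt w :|: [set otest w] == S) && (Omega_tr w == T))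
  = odds p k / \sum_(x in S) odds p x.
Proof.
rewrite /condPr -/(cal_test_tr_event S T) -/(Pr_test_at p q beta S T k) in hpos *.
have disjoint_ST x : x \in S -> x \notin T.
  by move=> xS; apply/negP => xT; rewrite (Pr_cal_test_tr_eq0 p q beta xS xT) ltxx in hpos.
have key := Pr_test_at_odds q beta disjoint_ST hp hk.
(* If p = 1 on all of S, both sides are 0: the left one because k is
   always observed, hence never the test point, the right one as x / 0 = 0. *)
have [sum0|sumN0] := eqVneq (\sum_(x in S) odds p x) 0; last first.
  by apply/eqP; rewrite eqr_div ?(gt_eqF hpos) // key.
have oddsk0 : odds p k = 0 := psumr_eq0P (fun x _ => odds_ge0 hp x) sum0 hk.
by rewrite Pr_test_at_p1 ?(odds_eq0 hp) // oddsk0 !mul0r.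
Qed.
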